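(* Let $n$ be a square-free integer with $n\neq 1$ and let $\lambda\geq 1$ be an integer. The action of the Hecke group $H(\lambda)$ on $\mathbb{Q}^*(\sqrt{n})$ has finitely many orbits if and only if $\lambda\in\{1,2\}$.
   Context: For a square-free integer $n\neq 1$, $\mathbb{Q}^*(\sqrt{n})=\left\{\frac{a+\sqrt{n}}{c}\;:\;a,c\in\mathbb{Z},\ c\neq 0,\ \frac{a^2-n}{c}\in\mathbb{Z}\right\}\subset\mathbb{Q}(\sqrt n)$ (inside $\mathbb{C}$ when $n<0$). For an integer $\lambda\geq 1$, $H(\lambda)$ is the group of linear fractional transformations generated by $x:z\mapsto -1/z$ and $w_\lambda:z\mapsto z+\lambda$; it acts on $\mathbb{Q}^*(\sqrt n)$ (both generators map $\mathbb{Q}^*(\sqrt n)$ into itself). *)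

(* Q(sqrt n) is realised inside the algebraic complex numbers algC. *)
From HB Require Import structures.
From mathcomp Require Import all_boot all_order all_algebra all_field.
Set Implicit Arguments. Unset Strict Implicit. Unset Printing Implicit Defensive.
Import Order.TTheory GRing.Theory Num.Theory.
Local Open Scope ring_scope.

(* n is square-free: the only integers whose square divides n are +-1
   (so in particular n <> 0). *)
Definition squarefree (n : int) : Prop :=
  forall d : int, (d * d %| n)%Z -> `|d| = 1.

(* Q^*(sqrt n) = { (a + sqrt n)/c : a, c in Z, c <> 0, c | a^2 - n },
   as a subset of algC (sqrtC n = i sqrt|n| when n < 0). *)
Definition Qstar (n : int) (z : algC) : Prop :=
  exists a c : int, c != 0 /\ (c %| a ^+ 2 - n)%Z /\
    z = (a%:~R + sqrtC (n%:~R)) / c%:~R.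

(* The generators of H(lambda) and the inverse of w_lambda
   (x is an involution). *)
Definition hx (z : algC) : algC := - z^-1.
Definition hw (lam : nat) (z : algC) : algC := z + lam%:R.
Definition hwinv (lam : nat) (z : algC) : algC := z - lam%:R.

Inductive Hecke (lam : nat) : (algC -> algC) -> Prop :=
  | Hecke_id : Hecke lam id
  | Hecke_x g : Hecke lam g -> Hecke lam (hx \o g)
  | Hecke_w g : Hecke lam g -> Hecke lam (hw lam \o g)
  | Hecke_winv g : Hecke lam g -> Hecke lam (hwinv lam \o g).

Definition same_orbit (lam : nat) (z w : algC) : Prop :=
  exists g, Hecke lam g /\ g z = w.

Definition finitely_many_orbits (n : int) (lam : nat) : Prop :=
  exists s : seq algC, (forall w, w \in s -> Qstar n w) /\
    forall z, Qstar n z -> exists2 w, w \in s & same_orbit lam z w.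

(* Every element of H(lambda) is the value of a reduced word in x and the
   translations w_lambda^k (k <> 0): no two consecutive x's and no two
   consecutive translations.

   lambda >= 3 (ping-pong).  Let F = {1 < |z| < 3/2}.  Applied to a point of
   F, a nonempty reduced word lands in P = {|z| < 1} if it starts with x and
   in Q = {|z - k lambda| < 3/2 for some k <> 0} if it starts with a
   translation; both regions avoid F.  Hence distinct points of F lie in
   distinct orbits.  The points z_m = 1 + 1/(m - sqrt n), m >= |n| + 3, are
   pairwise distinct points of F inside Q^*(sqrt n), so by pigeonhole no
   finite list of points meets every orbit.

   lambda in {1, 2} (reduction).  A translation turns (a + sqrt n)/c into a
   point with |a| <= |c|, because lambda |c| <= 2 |c|.  Writing a^2 - n = c b,
   either |b| < |c| and x maps the point to (-a + sqrt n)/b, or |c| <= |b|,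
   which forces |a| <= |c| <= |n|.  Descending on |c|, every orbit meets the
   finite set of points (a + sqrt n)/c with |a|, |c| <= |n|. *)

From mathcomp Require Import all_boot all_order all_algebra all_field.
From mathcomp Require Import zify ring.
From Stdlib Require Import Classical.
Import Order.TTheory GRing.Theory Num.Theory.
Set Implicit Arguments. Unset Strict Implicit. Unset Printing Implicit Defensive.
Local Open Scope ring_scope.

Lemma Hecke_comp lam g h : Hecke lam g -> Hecke lam h -> Hecke lam (g \o h).
Proof.
move=> Hg Hh; elim: Hg => [|g' _ IH|g' _ IH|g' _ IH] //.
- exact: Hecke_x IH.
- exact: Hecke_w IH.
- exact: Hecke_winv IH.
Qed.

Lemma hxK : involutive hx.
Proof. by move=> y; rewrite /hx invrN invrK opprK. Qed.

Lemma Hecke_inv lam g : Hecke lam g -> exists2 h, Hecke lam h & cancel g h.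
Proof.
elim=> [|g' _ [h Hh K]|g' _ [h Hh K]|g' _ [h Hh K]].
- by exists id; [exact: Hecke_id|].
- exists (h \o hx); first exact: Hecke_comp Hh (Hecke_x (Hecke_id lam)).
  by move=> y /=; rewrite hxK.
- exists (h \o hwinv lam); first exact: Hecke_comp Hh (Hecke_winv (Hecke_id lam)).
  by move=> y /=; rewrite /hwinv /hw addrK.
- exists (h \o hw lam); first exact: Hecke_comp Hh (Hecke_w (Hecke_id lam)).
  by move=> y /=; rewrite /hwinv /hw subrK.
Qed.

Lemma Hecke_shift_nat lam (k : nat) :
  exists2 g, Hecke lam g & forall z, g z = z + k%:R * lam%:R.
Proof.
elim: k => [|k [g Hg E]].
  by exists id; [exact: Hecke_id | move=> z; rewrite mul0r addr0].
exists (hw lam \o g); first exact: Hecke_w.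
by move=> z; rewrite /= E /hw mulrSr mulrDl mul1r addrA.
Qed.

Lemma Hecke_shift lam (q : int) :
  exists2 g, Hecke lam g & forall z, g z = z + q%:~R * lam%:R.
Proof.
case: q => k; have [g Hg E] := Hecke_shift_nat lam k.
  by exists g => // z; rewrite E -pmulrn.
have [g' Hg' E'] := Hecke_shift_nat lam k.+1.
have [h Hh K] := Hecke_inv Hg'.
exists h => // z; rewrite NegzE mulrNz -pmulrn mulNr.
by rewrite -{1}[z](subrK (k.+1%:R * lam%:R)) -E' K.
Qed.

Inductive letter := LX | LW of int.

Fixpoint eval_word (lam : nat) (l : seq letter) (z : algC) : algC :=
  match l with
  | [::] => z
  | LX :: l' => hx (eval_word lam l' z)
  | LW k :: l' => eval_word lam l' z + k%:~R * lam%:R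
  end.

Fixpoint reduced (l : seq letter) : bool :=
  match l with
  | [::] => true
  | LX :: l' => (if l' is LX :: _ then false else true) && reduced l'
  | LW k :: l' =>
      [&& k != 0, (if l' is LW _ :: _ then false else true) & reduced l']
  end.

Lemma reduced_shift lam l (e : int) : reduced l -> exists2 l', reduced l' &
  forall z, eval_word lam l' z = eval_word lam l z + e%:~R * lam%:R.
Proof.
have [-> Hr|e0] := eqVneq e 0; first by exists l => // z; rewrite mul0r addr0.
case: l => [|[|k] l] /= Hr.
- by exists [:: LW e] => //=; rewrite e0.
- by exists (LW e :: LX :: l) => //=; rewrite e0.
- move/and3P: Hr => [k0 hd Hr].
  have shiftE z : eval_word lam l z + (k + e)%:~R * lam%:R =
      eval_word lam l z + k%:~R * lam%:R + e%:~R * lam%:R.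
    by rewrite intrD mulrDl addrA.
  have [ke|ke] := eqVneq (k + e) 0.
    by exists l => // z; rewrite -shiftE ke mul0r addr0.
  by exists (LW (k + e) :: l) => /=; rewrite ?ke ?hd.
Qed.

Lemma Hecke_word lam g : Hecke lam g ->
  exists2 l, reduced l & forall z, g z = eval_word lam l z.
Proof.
elim=> [|g' _ [l Hr E]|g' _ [l Hr E]|g' _ [l Hr E]]; first by exists [::].
- case: l Hr E => [|[|k] l] Hr E.
  + by exists [:: LX] => // z /=; rewrite E.
  + exists l; first by case/andP: Hr.
    by move=> z /=; rewrite E /= hxK.
  + by exists (LX :: LW k :: l) => // z /=; rewrite E.
- have [l' Hr' E'] := reduced_shift lam 1 Hr.
  by exists l' => // z /=; rewrite E' -E /hw mul1r.
- have [l' Hr' E'] := reduced_shift lam (-1) Hr.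
  by exists l' => // z /=; rewrite E' -E /hwinv mulN1r.
Qed.

Definition half3 : algC := 3%:R / 2%:R.
Definition inF (y : algC) : Prop := 1 < `|y| /\ `|y| < half3.
Definition inP (y : algC) : Prop := `|y| < 1.
Definition inQ (lam : nat) (y : algC) : Prop :=
  exists2 k : int, k != 0 & `|y - k%:~R * lam%:R| < half3.

(* The region into which a reduced word maps F, read off its first letter. *)
Definition target (lam : nat) (l : seq letter) : algC -> Prop :=
  match l with [::] => inF | LX :: _ => inP | LW _ :: _ => inQ lam end.

Lemma half3_gt1 : 1 < half3.
Proof. by rewrite /half3 ltr_pdivlMr ?ltr0n // mul1r ltr_nat. Qed.

Lemma hx_inP y : 1 < `|y| -> inP (hx y).
Proof.
move=> h; rewrite /inP /hx normrN normfV invf_lt1 //.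
exact: lt_trans h.
Qed.

Section PingPong.
Variable lam : nat.
Hypothesis lam_ge3 : (3 <= lam)%N.

(* Q lies outside the disc of radius 3/2: its centres have modulus >= 3. *)
Lemma inQ_gt y : inQ lam y -> half3 < `|y|.
Proof.
move=> [k k0 h]; set t := k%:~R * lam%:R in h.
have t3 : 3%:R <= `|t|.
  rewrite /t (_ : _ * _ = (k * lam%:Z)%:~R); last by rewrite intrM.
  by rewrite [3%:R]pmulrn -intr_norm ler_int; lia.
have h3 : 3%:R - half3 = half3 by rewrite /half3; field.
rewrite -h3; apply: lt_le_trans (_ : `|t| - `|t - y| <= _).
  by apply: ler_ltB => //; rewrite distrC.
by have := lerB_dist t (t - y); rewrite (_ : t - (t - y) = y) //; ring.
Qed.

Lemma pingpong l z : reduced l -> inF z -> target lam l (eval_word lam l z).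
Proof.
move=> + Fz; elim: l => [//|[|k] l IH] /=.
- case/andP=> hd Hr; have := IH Hr; case: l hd {IH Hr} => [|[|j] l] //= _.
    by move=> _; exact: hx_inP Fz.1.
  by move/inQ_gt => Q; apply: hx_inP; exact: lt_trans half3_gt1 Q.
- case/and3P=> k0 hd Hr; exists k => //; rewrite addrK.
  have := IH Hr; case: l hd {IH Hr} => [|[|j] l] //= _; first by case.
  by move=> P; exact: lt_trans P half3_gt1.
Qed.

Lemma reduced_fix_F l z :
  reduced l -> inF z -> inF (eval_word lam l z) -> l = [::].
Proof.
move=> Hr Fz; have := pingpong Hr Fz.
case: l {Hr} => [//|[|k] l] /= H [F1 F2].
- by have := lt_trans F1 H; rewrite ltxx.
- by have := lt_trans F2 (inQ_gt H); rewrite ltxx.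
Qed.

Lemma same_orbit_F z1 z2 w : inF z1 -> inF z2 ->
  same_orbit lam z1 w -> same_orbit lam z2 w -> z1 = z2.
Proof.
move=> F1 F2 [g1 [H1 E1]] [g2 [H2 E2]].
have [h Hh K] := Hecke_inv H2.
have [l Hr E] := Hecke_word (Hecke_comp Hh H1).
have hg1 : h (g1 z1) = z2 by rewrite E1 -E2 K.
have Fl : inF (eval_word lam l z1) by rewrite -E /= hg1.
by have := E z1; rewrite /= hg1 (reduced_fix_F Hr F1 Fl) => ->.
Qed.

End PingPong.

Definition rootn (n : int) : algC := sqrtC n%:~R.
Definition qpt (n a c : int) : algC := (a%:~R + rootn n) / c%:~R.

Lemma rootnK n : rootn n ^+ 2 = n%:~R.
Proof. exact: sqrtCK. Qed.

Lemma norm_rootn_le n : n != 0 -> `|rootn n| <= `|n|%:~R.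
Proof.
move=> n0; have n1 : 1 <= `|n|%:~R :> algC by rewrite ler1z; lia.
have [h|h] := real_leP (normr_real (rootn n)) (real1 algC); first exact: le_trans h n1.
have -> : `|n|%:~R = `|rootn n| ^+ 2 :> algC by rewrite -normrX rootnK intr_norm.
rewrite expr2; apply: ltW; rewrite ltr_pMr //.
exact: lt_trans ltr01 h.
Qed.

Lemma Re_le_norm (z : algC) : 'Re z <= `|z|.
Proof. by case: (leif_Re_Creal z). Qed.

Lemma Re_intr (k : int) : 'Re (k%:~R : algC) = k%:~R.
Proof. by apply/Creal_ReP; rewrite realz. Qed.

Definition zm (n : int) (m : nat) : algC := 1 + (m%:~R - rootn n)^-1.

Lemma zm_inj n m1 m2 : zm n m1 = zm n m2 -> m1 = m2.
Proof.
rewrite /zm => /addrI /invr_inj /addIr /eqP.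
by rewrite eqr_int => /eqP [].
Qed.

Lemma Re_zm_denominators n (m : nat) : n != 0 -> (`|n| + 3 <= m)%N ->
  3%:R <= 'Re (m%:~R - rootn n) /\ 0 < 'Re (m%:~R + rootn n).
Proof.
move=> n0 hm; have hs := norm_rootn_le n0.
have m3 : `|n|%:~R + 3%:R <= m%:~R :> algC.
  by rewrite [3%:R]pmulrn -intrD ler_int; lia.
have Re_ge : m%:~R - `|rootn n| <= 'Re (m%:~R + rootn n) /\
             m%:~R - `|rootn n| <= 'Re (m%:~R - rootn n).
  rewrite !raddfD /= raddfN /= Re_intr !lerD2l lerN2 Re_le_norm.
  by rewrite lerNl -raddfN /= -normrN Re_le_norm.
split; [apply: le_trans Re_ge.2 | apply: lt_le_trans Re_ge.1].
  by rewrite lerBrDl; apply: le_trans m3; rewrite lerD2r.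
rewrite subr_gt0; apply: le_lt_trans hs _; apply: lt_le_trans m3.
by rewrite ltrDl ltr0n.
Qed.

Lemma zm_inF n m : n != 0 -> (`|n| + 3 <= m)%N -> inF (zm n m).
Proof.
move=> n0 /(Re_zm_denominators n0) [Rev _]; set v := _ - _ in Rev *.
have v3 : 3%:R <= `|v| by apply: le_trans Rev (Re_le_norm v).
have vpos : 0 < `|v| by apply: lt_le_trans v3; rewrite ltr0n.
split.
- apply: lt_le_trans (Re_le_norm _).
  rewrite /zm raddfD /= (Re_intr 1) ltrDl ReV divr_gt0 ?exprn_gt0 //.
  by apply: lt_le_trans Rev; rewrite ltr0n.
- apply: le_lt_trans (ler_normD _ _) _.
  rewrite normr1 normfV (_ : half3 = 1 + 2%:R^-1); last by rewrite /half3; field.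
  rewrite ltrD2l ltf_pV2 ?posrE ?ltr0n //.
  by apply: lt_le_trans v3; rewrite ltr_nat.
Qed.

(* z_m = (c + m + sqrt n)/c with c = m^2 - n, and a^2 - n = c (c + 2m + 1). *)
Lemma zm_Qstar n m : n != 0 -> (`|n| + 3 <= m)%N -> Qstar n (zm n m).
Proof.
move=> n0 hm; have [Rev Rew] := Re_zm_denominators n0 hm.
set v := _ - _ in Rev; set w := _ + _ in Rew.
have v0 : v != 0 by apply/eqP => e; move: Rev; rewrite e raddf0 lern0.
have w0 : w != 0 by apply/eqP => e; move: Rew; rewrite e raddf0 ltxx.
set c := (m%:Z) ^+ 2 - n.
exists (c + m), c; split; last split.
- apply/eqP => e; have : (m%:Z) ^+ 2 = n by rewrite -[n]add0r -e subrK.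
  nia.
- by apply/dvdzP; exists (c + 2 * m + 1); rewrite /c; ring.
- have ec : (c%:~R : algC) = v * w.
    by rewrite rmorphB /= rmorphXn /= /v /w -(rootnK n); ring.
  rewrite rmorphD /= ec /zm -/v -addrA (_ : m%:~R + rootn n = w) //.
  by field; rewrite v0 w0.
Qed.

Lemma no_finite_cover (T : eqType) (R : nat -> T -> Prop) :
  (forall m1 m2 w, R m1 w -> R m2 w -> m1 = m2) ->
  forall (s : seq T) M, ~ (forall m, (M <= m)%N -> exists2 w, w \in s & R m w).
Proof.
move=> U; elim=> [|w s IH] M H; first by have [] := H M (leqnn M).
have [[m0 R0]|nR] := classic (exists m0, R m0 w).
- apply: (IH (maxn M m0.+1)) => m; rewrite geq_max => /andP [hM hm0].
  have [w' /[!inE] /orP [/eqP ew|ws] Rw] := H m hM; last by exists w'.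
  by move: hm0; rewrite ew in Rw; rewrite (U _ _ _ Rw R0) ltnn.
- apply: (IH M) => m hm.
  have [w' /[!inE] /orP [/eqP ew|ws] Rw] := H m hm; last by exists w'.
  by case: nR; exists m; rewrite -ew.
Qed.

Lemma infinitely_many_orbits n lam :
  n != 0 -> (3 <= lam)%N -> ~ finitely_many_orbits n lam.
Proof.
move=> n0 l3 [s [_ cover]].
pose R m w := (`|n| + 3 <= m)%N /\ same_orbit lam (zm n m) w.
apply: (@no_finite_cover _ R _ s (`|n| + 3)).
  move=> m1 m2 w [h1 o1] [h2 o2]; apply: (@zm_inj n).
  exact: (same_orbit_F l3 (zm_inF n0 h1) (zm_inF n0 h2) o1 o2).
move=> m hm; have [w ws o] := cover _ (zm_Qstar n0 hm).
by exists w.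
Qed.

Lemma squarefree_neq0 n : squarefree n -> n != 0.
Proof. by move=> sf; apply/eqP => n0; have := sf 0; rewrite n0 mul0r dvdzz => /(_ isT). Qed.

Lemma squarefree_not_square n (a : int) : squarefree n -> n != 1 -> a ^+ 2 != n.
Proof.
move=> sf n1; apply/eqP => an; have := sf a; rewrite -an expr2 dvdzz => /(_ isT).
by move: n1; rewrite -an; nia.
Qed.

Lemma int_add_rootn_neq0 n (a : int) : a ^+ 2 != n -> a%:~R + rootn n != 0.
Proof.
move=> an; apply: contraNneq an => e.
have es : rootn n = - a%:~R by apply/eqP; rewrite -addr_eq0 addrC e.
by rewrite -(eqr_int algC) rmorphXn /= -(rootnK n) es sqrrN.
Qed.

Lemma hx_qpt n (a c b : int) : a ^+ 2 != n -> a ^+ 2 - n = c * b ->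
  hx (qpt n a c) = qpt n (- a) b.
Proof.
move=> an e; have cb0 : (c * b)%:~R != 0 :> algC.
  by rewrite intr_eq0 -e subr_eq0.
have [c0 b0] : c%:~R != 0 :> algC /\ b%:~R != 0 :> algC.
  by move: cb0; rewrite intrM mulf_eq0 negb_or => /andP.
have ec : (c%:~R : algC) = (a%:~R ^+ 2 - rootn n ^+ 2) / b%:~R.
  by rewrite rootnK -rmorphXn -rmorphB /= e rmorphM /= mulfK.
have d0 : a%:~R ^+ 2 - rootn n ^+ 2 != 0 :> algC.
  by rewrite rootnK -rmorphXn -rmorphB /= e.
rewrite /hx /qpt ec rmorphN /=.
by field; rewrite int_add_rootn_neq0 // b0 d0.
Qed.

Lemma shift_qpt n (lam : nat) (a c q : int) : c != 0 ->
  qpt n a c + q%:~R * lam%:R = qpt n (a + q * (lam%:Z * c)) c.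
Proof.
move=> c0; have c0' : (c%:~R : algC) != 0 by rewrite intr_eq0.
by rewrite /qpt rmorphD rmorphM rmorphM /= -pmulrn; field.
Qed.

Lemma small_representative (lam : nat) (a c : int) : (lam = 1 \/ lam = 2)%N ->
  c != 0 -> exists q : int, `|a + q * (lam%:Z * c)| <= `|c|.
Proof.
move=> [->|->] c0; first by exists (- (a %/ c)%Z); lia.
have [cp|cn] := ltrP 0 c.
  have [h|h] := lerP (a %% (2%:Z * c))%Z c.
    by exists (- (a %/ (2%:Z * c))%Z); lia.
  by exists (- (a %/ (2%:Z * c))%Z - 1); lia.
have [h|h] := lerP (a %% (2%:Z * c))%Z (- c).
  by exists (- (a %/ (2%:Z * c))%Z); lia.
by exists (- (a %/ (2%:Z * c))%Z + 1); lia.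
Qed.

Lemma translate_numerator n lam (a c : int) : (lam = 1 \/ lam = 2)%N ->
  c != 0 -> (c %| a ^+ 2 - n)%Z -> exists g (a1 : int), [/\ Hecke lam g,
    g (qpt n a c) = qpt n a1 c, `|a1| <= `|c| & (c %| a1 ^+ 2 - n)%Z].
Proof.
move=> l12 c0 /dvdzP [t ht].
have [q hq] := small_representative a l12 c0.
have [g Hg E] := Hecke_shift lam q.
exists g, (a + q * (lam%:Z * c)); split => //; first by rewrite E shift_qpt.
apply/dvdzP; exists (t + 2 * a * q * lam%:Z + q ^+ 2 * lam%:Z ^+ 2 * c).
have -> : (a + q * (lam%:Z * c)) ^+ 2 - n =
  (a ^+ 2 - n) + (2 * a * q * lam%:Z + q ^+ 2 * lam%:Z ^+ 2 * c) * c by ring.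
by rewrite ht; ring.
Qed.

Lemma product_gap (x y t : int) : 0 <= x -> x <= y -> y <= t -> 1 <= y ->
  1 <= y * t - x * x -> y <= y * t - x * x.
Proof.
move=> x0 xy yt y1 h; have [exy|nxy] := eqVneq x y.
  rewrite exy in h *; have : 1 <= t - y by nia.
  nia.
have : x * x <= (y - 1) * (y - 1) by nia.
nia.
Qed.

Lemma reduced_denominator_bound (a c b n : int) : `|a| <= `|c| -> `|c| <= `|b| ->
  c * b = a ^+ 2 - n -> n != 0 -> c != 0 -> `|c| <= `|n|.
Proof.
move=> ac cb e n0 c0.
have ea : a ^+ 2 = `|a| * `|a| by nia.
have [h|h] := lerP 0 (c * b).
  have e2 : c * b = `|c| * `|b| by rewrite -normrM ger0_norm.
  have : `|a| * `|a| <= `|c| * `|b| by nia.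
  have := @product_gap `|a| `|c| `|b|; lia.
have e2 : c * b = - (`|c| * `|b|) by rewrite -normrM ltr0_norm ?opprK.
have : `|c| <= `|c| * `|b| by nia.
lia.
Qed.

Section Reduction.
Variables (n : int) (lam : nat).
Hypotheses (sf : squarefree n) (n_neq1 : n != 1) (lam12 : (lam = 1 \/ lam = 2)%N).

Lemma descent k (a c : int) : (absz c <= k)%N -> c != 0 -> (c %| a ^+ 2 - n)%Z ->
  exists g (a' c' : int), [/\ Hecke lam g, g (qpt n a c) = qpt n a' c',
    c' != 0, (c' %| a' ^+ 2 - n)%Z & `|a'| <= `|n| /\ `|c'| <= `|n|].
Proof.
elim: k a c => [|k IH] a c hk c0 hd; first by move: c0 hk; lia.
have [g1 [a1 [H1 E1 ha1 hd1]]] := translate_numerator lam12 c0 hd.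
have [b hb] : exists b, a1 ^+ 2 - n = c * b.
  by case/dvdzP: hd1 => b hb; exists b; rewrite mulrC.
have a1n := squarefree_not_square a1 sf n_neq1.
have [cb|bc] := lerP `|c| `|b|.
  have cn := reduced_denominator_bound ha1 cb (esym hb) (squarefree_neq0 sf) c0.
  by exists g1, a1, c; split => //; split => //; exact: le_trans ha1 cn.
have b0 : b != 0 by apply: contraNneq a1n => b0; rewrite -subr_eq0 hb b0 mulr0.
have hdb : (b %| (- a1) ^+ 2 - n)%Z by rewrite sqrrN hb dvdz_mull.
have hk' : (absz b <= k)%N.
  by rewrite -ltnS (leq_trans _ hk) // -ltz_nat !abszE.
have [g2 [a' [c' [H2 E2 rest]]]] := IH _ _ hk' b0 hdb.
exists (g2 \o (hx \o g1)), a', c'; split => //; first exact: Hecke_comp H2 (Hecke_x H1).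
by rewrite /= E1 (hx_qpt a1n hb).
Qed.

End Reduction.

Definition small_ints (n : int) : seq int :=
  [seq i%:Z - (absz n)%:Z | i <- iota 0 (absz n + absz n).+1].

Lemma mem_small_ints n (x : int) : `|x| <= `|n| -> x \in small_ints n.
Proof.
move=> h; apply/mapP; exists (absz (x + (absz n)%:Z)); last lia.
by rewrite mem_iota; lia.
Qed.

Definition representatives (n : int) : seq algC :=
  [seq qpt n p.1 p.2 | p <- [seq (a, c) | a <- small_ints n, c <- small_ints n]
     & (p.2 != 0) && (p.2 %| p.1 ^+ 2 - n)%Z].

Lemma representatives_Qstar n w : w \in representatives n -> Qstar n w.
Proof.
case/mapP=> p; rewrite mem_filter => /andP [/andP [p0 pd] _] ->.
by exists p.1, p.2.
Qed.

Lemma mem_representatives n (a c : int) : c != 0 -> (c %| a ^+ 2 - n)%Z ->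
  `|a| <= `|n| -> `|c| <= `|n| -> qpt n a c \in representatives n.
Proof.
move=> c0 hd ha hc; apply/mapP; exists (a, c) => //.
rewrite mem_filter c0 hd; apply/allpairsP.
by exists (a, c); split => //; exact: mem_small_ints.
Qed.

Lemma finitely_many_orbits_small n lam : squarefree n -> n != 1 ->
  (lam = 1 \/ lam = 2)%N -> finitely_many_orbits n lam.
Proof.
move=> sf n1 l12; exists (representatives n); split; first exact: representatives_Qstar.
move=> z [a [c [c0 [hd ->]]]].
have [g [a' [c' [Hg E c0' hd' [ha hc]]]]] := descent sf n1 l12 (leqnn _) c0 hd.
by exists (qpt n a' c'); [exact: mem_representatives | exists g].
Qed.

Theorem theorem1p4 (n : int) (lam : nat) :
  squarefree n -> n != 1 -> (1 <= lam)%N ->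
  (finitely_many_orbits n lam <-> lam = 1%N \/ lam = 2%N).
Proof.
move=> sf n1 lam1; split; last exact: finitely_many_orbits_small.
move=> fin; have [lam2|lam3] := leqP lam 2; first lia.
by case: (infinitely_many_orbits (squarefree_neq0 sf) lam3 fin).
Qed.
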